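(* Let $G$ be a $(3,4)$-biregular $X,Y$-bigraph (multiple edges allowed) in which every vertex of $X$ has degree 3 and every vertex of $Y$ has degree 4, and let $P$ be a proper path-factor of $G$. Let $Q=G-E(P)$. Let $G_P$ be the graph whose vertex set is $\{x\in X : d_P(x)=2\}$, in which $x_i$ and $x_j$ are adjacent whenever (a) $x_i$ and $x_j$ are vertices of degree 2 in one component of $P$ that is a path of length 6, or (b) $x_i$ and $x_j$ are vertices of degree 2 at distance 4 in one component of $P$ that is a path of length 8, or (c) $x_i$ and $x_j$ are the vertices of degree 1 of one component of $Q$. Then $G_P$ is bipartite.
   Context: Graphs may have multiple edges. An $X,Y$-bigraph is a bipartite graph with partite sets $X$ and $Y$. A $(3,4)$-biregular bigraph is a bipartite graph in which every vertex of one part has degree 3 and every vertex of the other part has degree 4. A proper path-factor of a $(3,4)$-biregular $X,Y$-bigraph $G$ (with $X$ the degree-3 side) is a spanning subgraph of $G$ each of whose components is a path whose two endpoints lie in $X$ and whose length (number of edges) lies in $\{2,4,6,8\}$. $d_H(v)$ denotes the degree of $v$ in $H$. *)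

(* Multigraph X,Y-bigraph: edges are elements of a finType E,
   each edge e joining ex e \in X and ey e \in Y (parallel edges allowed). *)
From mathcomp Require Import all_boot.
Set Implicit Arguments. Unset Strict Implicit. Unset Printing Implicit Defensive.

Section Bigraph.
Variables (X Y E : finType) (ex : E -> X) (ey : E -> Y).

Definition vtx := (X + Y)%type.
Definition isX (v : vtx) : bool := if v is inl _ then true else false.

Definition incident (e : E) (v : vtx) : bool :=
  (v == inl (ex e)) || (v == inr (ey e)).

Definition degS (S : {set E}) (v : vtx) : nat := #|[set e in S | incident e v]|.

Definition adjS (S : {set E}) : rel vtx :=
  fun u v => (u != v) && [exists e in S, incident e u && incident e v].

Definition comp (S : {set E}) (v : vtx) : {set vtx} := [set u | connect (adjS S) v u].

Fixpoint walk (S : {set E}) (v : vtx) (vs : seq vtx) (es : seq E) : bool :=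
  match vs, es with
  | [::], [::] => true
  | w :: vs', e :: es' => [&& e \in S, incident e v, incident e w & walk S w vs' es']
  | _, _ => false
  end.

(* The component with vertex set C of (V(G), S) is the path with vertex
   sequence vs and edge sequence es (its length is size es). *)
Definition is_path_comp (S : {set E}) (C : {set vtx}) (vs : seq vtx) (es : seq E) : Prop :=
  match vs with
  | [::] => False
  | v0 :: vs' =>
      [/\ walk S v0 vs' es, uniq vs, uniq es,
          C = [set u in vs] &
          [set e in S | [exists u in C, incident e u]] = [set e in es]]
  end.

Definition biregular34 : Prop :=
  (forall x : X, #|[set e | ex e == x]| = 3) /\
  (forall y : Y, #|[set e | ey e == y]| = 4).

Definition proper_path_factor (P : {set E}) : Prop :=
  forall v : vtx, exists (vs : seq vtx) (es : seq E),
    [/\ is_path_comp P (comp P v) vs es, size es \in [:: 2; 4; 6; 8],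
        isX (head v vs) & isX (last v vs)].

Definition GP_adj (P : {set E}) (x1 x2 : X) : Prop :=
  let Q := ~: P in
  [/\ x1 != x2, degS P (inl x1) = 2, degS P (inl x2) = 2 &
    [\/
        (exists vs es, [/\ is_path_comp P (comp P (inl x1)) vs es, size es = 6 &
                           inl x2 \in comp P (inl x1)]),
        (exists vs es (i j : nat),
           [/\ is_path_comp P (comp P (inl x1)) vs es, size es = 8,
               (i < size vs) && (j < size vs),
               nth (inl x1) vs i = inl x1 /\ nth (inl x1) vs j = inl x2 &
               (i = j + 4 \/ j = i + 4)]) |
        [/\ inl x2 \in comp Q (inl x1), degS Q (inl x1) = 1 & degS Q (inl x2) = 1]]].

(* a graph on X (restricted to the vertices of G_P) is bipartite iff 2-colourable *)
Definition GP_bipartite (P : {set E}) : Prop :=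
  exists c : X -> bool, forall x1 x2 : X, GP_adj P x1 x2 -> c x1 != c x2.

End Bigraph.

From Pilot Require Import Defs.
From mathcomp Require Import all_boot zify.
From Stdlib Require Import Classical ClassicalEpsilon.

(* The edges of G_P of types (a) and (b) form a partial matching: a path of
   length 6 has exactly two inner vertices in X, and a path of length 8 has
   inner vertices of X at positions 2, 4, 6, of which only 2 and 6 are at
   distance 4 (they are the two steps away from an end, so this does not depend
   on the direction in which the path is listed).  The edges of type (c) form a partial
   matching too: each x keeps an edge of P and each y two, so Q has maximum
   degree 2 and a component of Q has at most two vertices of degree 1.  A union
   of two partial matchings is bipartite: view them as involutions f1, f2; on
   the part where neither has a fixed point, [x] and [f1 x] lie in distinct
   orbits of [f2 \o f1], which [f1] exchanges, and the remaining vertices have at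
   most one neighbour when coloured one at a time. *)
Set Implicit Arguments. Unset Strict Implicit. Unset Printing Implicit Defensive.

Section TwoInvolutions.
Variables (T : finType) (f1 f2 : T -> T).
Hypotheses (f1K : involutive f1) (f2K : involutive f2).

Let g x := f2 (f1 x).

Let g_inj : injective g.
Proof. by move=> x y /(inv_inj f2K) /(inv_inj f1K). Qed.

Let iter_g_inj n : injective (iter n g).
Proof. by elim: n => [//|n IHn] x y /= /g_inj /IHn. Qed.

(* [f1] conjugates [g] into its inverse. *)
Let iter_g_f1 n x : iter n g (f1 (iter n g x)) = f1 x.
Proof. by elim: n x => [//|n IHn] x; rewrite iterSr iterS /g f1K f2K IHn. Qed.

(* If [f1 x = g^m x], then [f1] swaps [g^k x] and [g^(m-k) x]; the middle of
   this reflection is a fixed point of [f1] (m even) or of [f2] (m odd). *)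
Let g_orbit_fixpoint x : fconnect g x (f1 x) ->
  exists n, f1 (iter n g x) = iter n g x \/ f2 (iter n g x) = iter n g x.
Proof.
move/iter_findex; move: (findex _ _ _) => m gmx.
have f1_mirror k l : k + l = m -> f1 (iter k g x) = iter l g x.
  move=> klm; apply: (@iter_g_inj k).
  by rewrite iter_g_f1 -gmx -iterD klm.
have [s m_def] : exists s, m = s.*2 + odd m by exists m./2; rewrite addnC odd_double_half.
move: m_def; case: (odd m) => m_def.
- exists s.+1; right.
  have f1s : f1 (iter s.+1 g x) = iter s g x by apply: f1_mirror; lia.
  by rewrite [in LHS]iterS /g -f1s f1K f2K.
- by exists s; left; apply: f1_mirror; lia.
Qed.

Definition proper_on (S : {set T}) (c : T -> bool) :=
  {in S, forall x, (f1 x \in S -> f1 x != x -> c (f1 x) != c x) /\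
                   (f2 x \in S -> f2 x != x -> c (f2 x) != c x)}.

Lemma proper_on_fixpoint_free (S : {set T}) :
  {in S, forall v, [&& f1 v \in S, f1 v != v, f2 v \in S & f2 v != v]} ->
  exists c, proper_on S c.
Proof.
move=> hS.
have gS n v : v \in S -> iter n g v \in S.
  elim: n => [//|n IHn] /IHn /hS /and4P [f1S _ _ _] /=.
  by case/and4P: (hS _ f1S).
have separated x : x \in S -> ~~ fconnect g x (f1 x).
  move=> xS; apply/negP => /g_orbit_fixpoint [n fixn].
  by case/and4P: (hS _ (gS n _ xS)) => _ /eqP f1n _ /eqP f2n; case: fixn.
pose r x := enum_rank (froot g x).
have r_eq x y : (r x == r y) = fconnect g x y.
  by rewrite (inj_eq enum_rank_inj) (root_connect (fconnect_sym g_inj)).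
have r_f2 x : r (f2 x) = r (f1 x).
  apply/eqP; rewrite r_eq (fconnect_sym g_inj).
  have -> : f2 x = g (f1 x) by rewrite /g f1K.
  exact: fconnect1.
have r_f1f2 x : r (f1 (f2 x)) = r x.
  apply/eqP; rewrite r_eq.
  have {2}-> : x = g (f1 (f2 x)) by rewrite /g f1K f2K.
  exact: fconnect1.
exists (fun x => r x < r (f1 x)) => x xS; rewrite /= f1K.
have : r x != r (f1 x) by rewrite r_eq separated.
rewrite r_f2 r_f1f2 neq_ltn => /orP [] lt_r.
  by split=> _ _; rewrite lt_r ltnNge ltnW.
by split=> _ _; rewrite lt_r ltnNge ltnW.
Qed.

Lemma proper_on_exists (S : {set T}) : exists c, proper_on S c.
Proof.
move: {2}#|S| (leqnn #|S|) => n; elim: n S => [|n IHn] S leSn.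
  exists xpredT => x; move: leSn; rewrite leqn0 cards_eq0 => /eqP ->.
  by rewrite inE.
have [|] := boolP [forall v in S, [&& f1 v \in S, f1 v != v, f2 v \in S & f2 v != v]].
  by move/forall_inP; apply: proper_on_fixpoint_free.
rewrite negb_forall_in => /existsP [v /andP [vS not_inner]].
have [c' c'P] : exists c', proper_on (S :\ v) c'.
  by apply: IHn; move: leSn; rewrite (cardsD1 v S) vS.
pose b1 := (f1 v \in S) && (f1 v != v).
pose b2 := (f2 v \in S) && (f2 v != v).
have not_b12 : ~~ (b1 && b2) by rewrite /b1 /b2 -!andbA.
exists (fun x => if x == v then (if b1 then ~~ c' (f1 v) else if b2 then ~~ c' (f2 v) else true)
                 else c' x).
move=> x xS /=; have [->|xv] := eqVneq x v.
  split=> fS fv; rewrite (negbTE fv).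
    have -> : b1 by rewrite /b1 fS fv.
    by case: (c' _).
  have b2T : b2 by rewrite /b2 fS fv.
  by rewrite b2T andbT in not_b12; rewrite (negbTE not_b12) b2T; case: (c' _).
have xS' : x \in S :\ v by rewrite !inE xv xS.
have [c'1 c'2] := c'P x xS'.
split=> fS fx.
- have [f1xv|f1xv] := eqVneq (f1 x) v.
    have f1v : f1 v = x by rewrite -f1xv f1K.
    have -> : b1 by rewrite /b1 f1v xS xv.
    by rewrite f1v; case: (c' _).
  by apply: c'1 fx; rewrite !inE f1xv.
- have [f2xv|f2xv] := eqVneq (f2 x) v.
    have f2v : f2 v = x by rewrite -f2xv f2K.
    have b2T : b2 by rewrite /b2 f2v xS xv.
    rewrite b2T andbT in not_b12.
    by rewrite (negbTE not_b12) b2T f2v; case: (c' _).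
  by apply: c'2 fx; rewrite !inE f2xv.
Qed.

Lemma involutions_2coloring : exists c : T -> bool, forall x,
  (f1 x != x -> c (f1 x) != c x) /\ (f2 x != x -> c (f2 x) != c x).
Proof.
have [c cP] := proper_on_exists [set: T].
exists c => x; have [c1 c2] := cP x (in_setT x).
by split; [apply: c1 | apply: c2]; rewrite in_setT.
Qed.

End TwoInvolutions.

Definition partial_matching (T : Type) (R : T -> T -> Prop) :=
  (forall x y, R x y -> R y x) /\ (forall x y z, R x y -> R x z -> y = z).

Lemma partial_matching_involution (T : Type) (R : T -> T -> Prop) :
  partial_matching R -> exists f : T -> T, involutive f /\ forall x y, R x y -> f x = y.
Proof.
case=> Rsym Rfun.
pose P x y := R x y \/ (~ (exists z, R x z) /\ y = x).
pose f x := epsilon (inhabits x) (P x).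
have fP x : P x (f x).
  apply: (epsilon_spec (inhabits x) (P x)); have [[z xz]|noR] := classic (exists z, R x z).
    by exists z; left.
  by exists x; right.
have fR x y : R x y -> f x = y.
  move=> xy; case: (fP x) => [xfx|[noR _]]; first exact: Rfun xfx xy.
  by case: noR; exists y.
exists f; split=> // x; case: (fP x) => [/Rsym/fR //|[_ fx]].
by rewrite fx fx.
Qed.

Lemma partial_matchings_2coloring (T : finType) (R1 R2 : T -> T -> Prop) :
  partial_matching R1 -> partial_matching R2 ->
  exists c : T -> bool, forall x y, x != y -> R1 x y \/ R2 x y -> c x != c y.
Proof.
move=> /partial_matching_involution [f1 [f1K f1R]] /partial_matching_involution [f2 [f2K f2R]].
have [c cP] := involutions_2coloring f1K f2K.
exists c => x y xy [/f1R|/f2R] fxy; subst y; rewrite eq_sym.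
  by apply: (cP x).1; rewrite eq_sym.
by apply: (cP x).2; rewrite eq_sym.
Qed.

Section Subgraphs.
Variables (X Y E : finType) (ex : E -> X) (ey : E -> Y).
Local Notation vtx := (vtx X Y).
Local Notation incident := (incident ex ey).
Local Notation adjS := (adjS ex ey).
Local Notation degS := (degS ex ey).
Local Notation comp := (Defs.comp ex ey).

Lemma incident3 e (a b c : vtx) : incident e a -> incident e b -> incident e c ->
  [|| a == b, a == c | b == c].
Proof. by rewrite /Defs.incident; do 3 case/orP => /eqP ->; rewrite ?eqxx ?orbT. Qed.

Lemma incident_isX e (a b : vtx) : incident e a -> incident e b -> a != b -> isX a != isX b.
Proof. by rewrite /Defs.incident; do 2 case/orP => /eqP ->; rewrite ?eqxx. Qed.

Lemma adjS_sym S : symmetric (adjS S).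
Proof.
move=> u v; rewrite /Defs.adjS eq_sym; congr (_ && _).
by apply: eq_existsb => e; rewrite (andbC (incident e u)).
Qed.

Lemma adjS_edge S u v :
  adjS S u v -> u != v /\ exists e, [/\ e \in S, incident e u & incident e v].
Proof. by case/andP => uv /existsP [e /and3P [eS eu ev]]; split => //; exists e. Qed.

Lemma edge_neq e e' (v a b : vtx) : incident e v -> incident e a -> incident e' v -> incident e' b ->
  v != a -> v != b -> a != b -> e != e'.
Proof.
move=> ev ea e'v e'b va vb ab; apply: contraNneq ab => ee'; subst e'.
by have := incident3 ev ea e'b; rewrite (negbTE va) (negbTE vb).
Qed.

Lemma degS_gt1 S v a b : adjS S v a -> adjS S v b -> a != b -> 1 < degS S v.
Proof.
move=> /adjS_edge [va [ea [eaS eav eaa]]] /adjS_edge [vb [eb [ebS ebv ebb]]] ab.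
apply/card_gt1P; exists ea, eb; rewrite !inE eaS eav ebS ebv.
by split=> //; apply: (edge_neq eav eaa ebv ebb va vb ab).
Qed.

Lemma degS_le1_adj S v a b : degS S v <= 1 -> adjS S v a -> adjS S v b -> a = b.
Proof.
move=> v1 va vb; apply/eqP; apply: contraTT v1 => ab.
by rewrite -ltnNge; apply: degS_gt1 ab.
Qed.

Lemma degS_le2_adj S v a b c : degS S v <= 2 ->
  adjS S v a -> adjS S v b -> adjS S v c -> a != b -> c = a \/ c = b.
Proof.
move=> v2 va vb vc ab.
have [->|ca] := eqVneq c a; first by left.
have [->|cb] := eqVneq c b; first by right.
move: va vb vc => /adjS_edge [va [ea [eaS eav eaa]]] /adjS_edge [vb [eb [ebS ebv ebb]]]
   /adjS_edge [vc [ec [ecS ecv ecc]]].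
have: #|ea |: [set eb; ec]| <= degS S v.
  apply: subset_leq_card; apply/subsetP => e; rewrite !inE.
  by case/or3P => /eqP ->; rewrite ?eaS ?ebS ?ecS ?eav ?ebv ?ecv.
have ac : a != c by rewrite eq_sym.
have bc : b != c by rewrite eq_sym.
rewrite cardsU1 cards2 !inE negb_or (edge_neq eav eaa ebv ebb va vb ab).
by rewrite (edge_neq ebv ebb ecv ecc vb vc bc) (edge_neq eav eaa ecv ecc va vc ac) => /leq_trans/(_ v2).
Qed.

(* The hypothesis on [x] forces the first step of both paths; afterwards
   maximum degree 2 leaves no choice. *)
Lemma degS_le2_paths_prefix S (p q : seq vtx) (x : vtx) :
  (forall v, degS S v <= 2) ->
  path (adjS S) x p -> path (adjS S) x q -> uniq (x :: p) -> uniq (x :: q) ->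
  (degS S x <= 1 \/ exists2 y, adjS S x y & y \notin p ++ q) ->
  exists r, q = p ++ r \/ p = q ++ r.
Proof.
move=> deg2; elim: p q x => [|a p IHp] q x; first by exists q; left.
case: q => [|b q]; first by exists (a :: p); right.
move=> /= /andP [xa pa] /andP [xb qb] /andP [xap up] /andP [xbq uq] x_start.
have ab : a = b.
  case: x_start => [x1|[y xy yNpq]]; first exact: degS_le1_adj x1 xa xb.
  have ya : y != a by apply: contraNneq yNpq => ->; rewrite !inE eqxx.
  have yb : y != b by apply: contraNneq yNpq => ->; rewrite /= inE mem_cat !inE eqxx !orbT.
  by have [ba|//] := degS_le2_adj (deg2 x) xy xa xb ya; rewrite ba eqxx in yb.
subst b.
have a_start : degS S a <= 1 \/ exists2 y, adjS S a y & y \notin p ++ q.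
  right; exists x; first by rewrite adjS_sym.
  by rewrite mem_cat negb_or; move: xap xbq; rewrite !inE !negb_or => /andP [_ ->] /andP [_ ->].
by have [r [->|->]] := IHp q a pa qb up uq a_start; exists r; [left | right].
Qed.

Lemma path_interior_degS S (u : vtx) p r :
  path (adjS S) u (p ++ r) -> uniq (u :: p ++ r) -> last u p != u -> r != [::] ->
  1 < degS S (last u p).
Proof.
case/lastP: p => [|p z]; first by rewrite eqxx.
case: r => [//|h r]; rewrite last_rcons cat_rcons => pr upr _ _.
move: pr; rewrite cat_path /= => /and3P [_ pz /andP [zh _]].
apply: (degS_gt1 (a := last u p) (b := h)); [by rewrite adjS_sym | done | ].
apply: contraTneq upr => pzh; apply/negP.
rewrite -cat_cons cat_uniq => /and3P [_ /hasP []]; exists h; first by rewrite !inE eqxx orbT.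
by rewrite /= -pzh mem_last.
Qed.

Lemma mem_comp S v : v \in comp S v.
Proof. by rewrite inE connect0. Qed.

Lemma comp_sym S u v : u \in comp S v -> v \in comp S u.
Proof. by rewrite !inE (sym_connect_sym (adjS_sym S)). Qed.

Lemma comp_eq S u v : u \in comp S v -> comp S u = comp S v.
Proof.
rewrite inE => vu; apply/setP => w; rewrite !inE.
apply/idP/idP; first exact: connect_trans.
by rewrite (sym_connect_sym (adjS_sym S)) in vu; apply: connect_trans.
Qed.

Lemma degS1_comp_uniq S (u w w' : vtx) : (forall v, degS S v <= 2) -> degS S u <= 1 ->
  w \in comp S u -> w' \in comp S u -> degS S w = 1 -> degS S w' = 1 ->
  w != u -> w' != u -> w = w'.
Proof.
move=> deg2 u1; rewrite !inE => /connectP [p0 p0P ->] /connectP [q0 q0P ->].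
case/shortenP: p0P => p pP pU _; case/shortenP: q0P => q qP qU _.
move=> pw1 qw1 pu qu.
have [r [qpr|pqr]] := degS_le2_paths_prefix deg2 pP qP pU qU (or_introl u1).
- have [r0|rn] := eqVneq r [::]; first by rewrite qpr r0 cats0.
  rewrite qpr in qP qU.
  by have := path_interior_degS qP qU pu rn; rewrite pw1.
- have [r0|rn] := eqVneq r [::]; first by rewrite pqr r0 cats0.
  rewrite pqr in pP pU.
  by have := path_interior_degS pP pU qu rn; rewrite qw1.
Qed.

Lemma degS_setC S v : degS (~: S) v + degS S v = #|[set e | incident e v]|.
Proof.
rewrite addnC -(cardsID S [set e | incident e v]).
by congr (_ + _); apply: eq_card => e; rewrite !inE andbC.
Qed.

End Subgraphs.

Section PathComponents.
Variables (X Y E : finType) (ex : E -> X) (ey : E -> Y).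
Local Notation vtx := (vtx X Y).
Local Notation incident := (incident ex ey).
Local Notation adjS := (adjS ex ey).
Local Notation degS := (degS ex ey).
Local Notation walk := (walk ex ey).

Lemma walk_nth S v vs es : walk S v vs es ->
  size vs = size es /\ forall j d e0, j < size es ->
  [/\ nth e0 es j \in S, incident (nth e0 es j) (nth d (v :: vs) j)
    & incident (nth e0 es j) (nth d (v :: vs) j.+1)].
Proof.
elim: vs v es => [|w vs IHvs] v [|e es] //=.
case/and4P => eS ev ew /IHvs [sz es_nth]; split; first by rewrite sz.
by case=> [|j] d e0 //= /es_nth.
Qed.

Variables (S : {set E}) (C : {set vtx}) (vs : seq vtx) (es : seq E).
Hypothesis pc : is_path_comp ex ey S C vs es.

Lemma path_comp_size : size vs = (size es).+1.
Proof. by case: vs pc => [//|v vs'] [/walk_nth [sz _]] /=; rewrite sz. Qed.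

Lemma path_comp_edge j d e0 : j < size es ->
  [/\ nth e0 es j \in S, incident (nth e0 es j) (nth d vs j)
    & incident (nth e0 es j) (nth d vs j.+1)].
Proof. by case: vs pc => [//|v vs'] [/walk_nth [_ es_nth] _ _ _ _]; apply: es_nth. Qed.

Lemma path_comp_uniq : uniq vs.
Proof. by case: vs pc => [//|v vs'] []. Qed.

Lemma path_comp_uniq_edges : uniq es.
Proof. by case: vs pc => [//|v vs'] []. Qed.

Lemma path_comp_vertices : C = [set u in vs].
Proof. by case: vs pc => [//|v vs'] []. Qed.

Lemma path_comp_edges : [set e in S | [exists u in C, incident e u]] = [set e in es].
Proof. by case: vs pc => [//|v vs'] []. Qed.

Let edge_inhabited : 0 < size es -> exists e0 : E, True.
Proof. by case: (es) => // e _ _; exists e. Qed.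

Lemma nth_path_comp_neq i j d : i < size vs -> j < size vs -> i != j -> nth d vs i != nth d vs j.
Proof. by move=> ilt jlt; rewrite (nth_uniq d ilt jlt path_comp_uniq). Qed.

Lemma path_comp_index u : u \in C -> exists2 i, i < size vs & u = nth u vs i.
Proof.
rewrite path_comp_vertices inE => uvs; exists (index u vs); first by rewrite index_mem.
by rewrite nth_index.
Qed.

Lemma card_path_comp : #|C| = size vs.
Proof.
rewrite path_comp_vertices; have /card_uniqP <- := path_comp_uniq.
by apply: eq_card => u; rewrite inE.
Qed.

Lemma path_comp_edge_index e i d e0 : e \in S -> i < size vs -> incident e (nth d vs i) ->
  (i < size es /\ e = nth e0 es i) \/ (0 < i /\ e = nth e0 es i.-1).
Proof.
move=> eS ilt ei; have szv := path_comp_size.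
have e_es : e \in es.
  have : e \in [set e in S | [exists u in C, incident e u]].
    by rewrite inE eS; apply/existsP; exists (nth d vs i); rewrite ei path_comp_vertices inE mem_nth.
  by rewrite path_comp_edges inE.
set k := index e es; have klt : k < size es by rewrite index_mem.
have [_ ek ek1] := path_comp_edge d e0 klt; rewrite nth_index // in ek ek1.
have nth_eq j : j < size vs -> nth d vs j = nth d vs i -> j = i.
  by move=> jlt /eqP; rewrite (nth_uniq d jlt ilt path_comp_uniq) => /eqP.
case/or3P: (incident3 ek ek1 ei) => /eqP eq_nth.
- by have := nth_path_comp_neq d (i := k) (j := k.+1); rewrite eq_nth eqxx; lia.
- by left; rewrite -(nth_eq k) ?nth_index //; lia.
- by right; rewrite -(nth_eq k.+1) ?nth_index //; lia.
Qed.

Lemma path_comp_adj i d : i < size es -> adjS S (nth d vs i) (nth d vs i.+1).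
Proof.
move=> ilt; have [e0 _] := edge_inhabited (leq_ltn_trans (leq0n i) ilt).
have [eS ei ei1] := path_comp_edge d e0 ilt; have szv := path_comp_size.
rewrite /Defs.adjS nth_path_comp_neq /=; try lia.
by apply/existsP; exists (nth e0 es i); rewrite eS ei ei1.
Qed.

Lemma path_comp_degS_end i d : (i == 0) || (i == size es) -> degS S (nth d vs i) <= 1.
Proof.
move=> i_end; have szv := path_comp_size.
have ilt : i < size vs by case/orP: i_end => /eqP ->; lia.
apply/card_le1_eqP => e e'; rewrite !inE => /andP [eS ei] /andP [e'S e'i].
have end_edge f : f \in S -> incident f (nth d vs i) -> f = nth e es i.-1.
  move=> fS fi; have [[i_es ->]|[_ ->] //] := path_comp_edge_index e fS ilt fi.
  by case/orP: i_end i_es => /eqP ->; rewrite ?ltnn.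
by rewrite (end_edge e eS ei) (end_edge e' e'S e'i).
Qed.

Lemma path_comp_degS_interior i d : 0 < i < size es -> 1 < degS S (nth d vs i).
Proof.
case/andP=> i_gt0 ilt; have [e0 _] := edge_inhabited (leq_ltn_trans (leq0n i) ilt).
have [a1 _ a2] := path_comp_edge d e0 (j := i.-1) (ltac:(lia)).
have [b1 b2 _] := path_comp_edge d e0 ilt.
rewrite prednK // in a2.
apply/card_gt1P; exists (nth e0 es i.-1), (nth e0 es i); rewrite !inE a1 a2 b1 b2.
split=> //; rewrite nth_uniq ?path_comp_uniq_edges ?(leq_ltn_trans (leq_pred i)) //.
by rewrite neq_ltn ltn_predL i_gt0.
Qed.

Lemma path_comp_degS_gt0 i d : 0 < size es -> i < size vs -> 0 < degS S (nth d vs i).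
Proof.
move=> es_gt0 ilt; have szv := path_comp_size; have [e0 _] := edge_inhabited es_gt0.
apply/card_gt0P; have [i_es|i_last] := ltnP i (size es).
  by have [a1 a2 _] := path_comp_edge d e0 i_es; exists (nth e0 es i); rewrite inE a1 a2.
have [a1 _ a2] := path_comp_edge d e0 (j := i.-1) (ltac:(lia)).
by rewrite prednK in a2; [exists (nth e0 es i.-1); rewrite inE a1 a2 | lia].
Qed.

Lemma path_comp_isX i d : i < size vs -> isX (nth d vs i) = odd i (+) isX (nth d vs 0).
Proof.
have szv := path_comp_size.
elim: i => [//|i IHi] ilt.
have [e0 _] := edge_inhabited (ltac:(lia)).
have [_ ei ei1] := path_comp_edge d e0 (j := i) (ltac:(lia)).
have := incident_isX ei ei1 (nth_path_comp_neq d (i := i) (j := i.+1) (ltac:(lia)) ilt (ltac:(lia))).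
by rewrite IHi; last lia; rewrite /=; case: (odd i); case: (isX _); case: (isX _).
Qed.

Lemma path_comp_adj_index i d u : i < size vs -> adjS S (nth d vs i) u ->
  exists2 j, j < size vs & u = nth d vs j /\ (j.+1 = i \/ j = i.+1).
Proof.
move=> ilt /adjS_edge [iu [e [eS ei eu]]]; have szv := path_comp_size.
have [[i_es e_def]|[i_gt0 e_def]] := path_comp_edge_index e eS ilt ei.
- have [_ c1 c2] := path_comp_edge d e i_es; rewrite -e_def in c1 c2.
  have ii1 : nth d vs i != nth d vs i.+1 by apply: nth_path_comp_neq; lia.
  have := incident3 c1 c2 eu; rewrite (negbTE iu) (negbTE ii1) /= => /eqP <-.
  by exists i.+1; [lia | split => //; right].
- have i1_es : i.-1 < size es by lia.
  have [_ c1 c2] := path_comp_edge d e i1_es; rewrite -e_def prednK // in c1 c2.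
  have i1i : nth d vs i.-1 != nth d vs i by apply: nth_path_comp_neq; lia.
  have := incident3 c1 c2 eu; rewrite (negbTE iu) orbF (negbTE i1i) /= => /eqP <-.
  by exists i.-1; [lia | split => //; left; lia].
Qed.

End PathComponents.

Section PathFactor.
Variables (X Y E : finType) (ex : E -> X) (ey : E -> Y) (P : {set E}).
Hypothesis hp : proper_path_factor ex ey P.
Local Notation vtx := (vtx X Y).
Local Notation adjS := (adjS ex ey).
Local Notation degS := (degS ex ey).
Local Notation comp := (Defs.comp ex ey).
Local Notation is_path_comp := (is_path_comp ex ey).

Lemma degS_path_factor_gt0 v : 0 < degS P v.
Proof.
have [vs [es [pc es_len _ _]]] := hp v.
have [i ilt ->] := path_comp_index pc (mem_comp ex ey P v).
by apply: (path_comp_degS_gt0 pc) => //; move: es_len; rewrite !inE; case/or4P => /eqP ->.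
Qed.

(* The ends of the paths lie in X and the paths alternate between X and Y,
   so a vertex of Y is interior to its path. *)
Lemma degS_path_factor_Y y : 1 < degS P (inr y).
Proof.
have [vs [es [pc _ head_X last_X]]] := hp (inr y).
have [i ilt y_def] := path_comp_index pc (mem_comp ex ey P (inr y)).
have szv := path_comp_size pc.
rewrite (_ : head _ _ = nth (inr y) vs 0) in head_X; last by case: (vs) szv.
rewrite -nth_last szv /= in last_X.
have := path_comp_isX pc (inr y) ilt; rewrite -y_def head_X addbT /= => /esym/negbFE odd_i.
have i_last : i != size es by apply: contraTneq last_X => i_es; rewrite -i_es -y_def.
have i_gt0 : 0 < i by move: odd_i; case: (i).
by rewrite y_def; apply: (path_comp_degS_interior pc); lia.
Qed.

Lemma degS_le1_isX (u : vtx) : degS P u <= 1 -> isX u.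
Proof. by case: u => // y; have := degS_path_factor_Y y; lia. Qed.

Lemma path_factor_deg2_index C vs es i d : is_path_comp P C vs es -> i < size vs ->
  isX (nth d vs i) -> degS P (nth d vs i) = 2 -> 0 < i < size es /\ ~~ odd i.
Proof.
move=> pc ilt iX i2; have szv := path_comp_size pc.
have head_X : isX (nth d vs 0) by apply/degS_le1_isX/(path_comp_degS_end pc).
have := path_comp_isX pc d ilt; rewrite iX head_X addbT => /(congr1 negb); rewrite negbK => even_i.
have i_end : ~~ ((i == 0) || (i == size es)).
  by apply/negP => /(path_comp_degS_end pc d); rewrite i2.
by split=> //; move: i_end ilt; rewrite szv; lia.
Qed.

Lemma path_factor_deg2_mem C vs es (x u : X) : is_path_comp P C vs es -> inl u \in C ->
  degS P (inl u) = 2 ->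
  exists k, [/\ k < size vs, inl u = nth (inl x) vs k, 0 < k < size es & ~~ odd k].
Proof.
move=> pc uC u2; have [k klt u_def] := path_comp_index pc uC.
rewrite (set_nth_default (inl x)) // in u_def.
have kX : isX (nth (inl x) vs k) by rewrite -u_def.
have k2 : degS P (nth (inl x) vs k) = 2 by rewrite -u_def.
by have [] := path_factor_deg2_index pc klt kX k2; exists k.
Qed.

Hypothesis hb : biregular34 ex ey.

(* Every vertex keeps at least one of its 3 edges in P, and a vertex of Y at least two of its 4. *)
Lemma degS_setC_le2 v : degS (~: P) v <= 2.
Proof.
have := degS_setC ex ey P v; case: hb => deg3 deg4.
case: v => [x|y] deg_sum.
- have : #|[set e | incident ex ey e (inl x)]| = 3.
    by rewrite -(deg3 x); apply: eq_card => e; rewrite !inE /Defs.incident /= orbF eq_sym.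
  have := degS_path_factor_gt0 (inl x); lia.
- have : #|[set e | incident ex ey e (inr y)]| = 4.
    by rewrite -(deg4 y); apply: eq_card => e; rewrite !inE /Defs.incident /= eq_sym.
  have := degS_path_factor_Y y; lia.
Qed.

Definition same_P6 (x1 x2 : X) := exists vs es,
  [/\ is_path_comp P (comp P (inl x1)) vs es, size es = 6 & inl x2 \in comp P (inl x1)].

Definition dist4_P8 (x1 x2 : X) := exists vs es (i j : nat),
  [/\ is_path_comp P (comp P (inl x1)) vs es, size es = 8,
      (i < size vs) && (j < size vs),
      nth (inl x1) vs i = inl x1 /\ nth (inl x1) vs j = inl x2 &
      (i = j + 4 \/ j = i + 4)].

Definition ends_Q (x1 x2 : X) :=
  [/\ inl x2 \in comp (~: P) (inl x1), degS (~: P) (inl x1) = 1 & degS (~: P) (inl x2) = 1].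

Definition GP_adjP (x1 x2 : X) := [/\ x1 != x2, degS P (inl x1) = 2, degS P (inl x2) = 2 &
  same_P6 x1 x2 \/ dist4_P8 x1 x2].

Definition GP_adjQ (x1 x2 : X) := x1 != x2 /\ ends_Q x1 x2.

Lemma GP_adj_PQ x1 x2 : GP_adj ex ey P x1 x2 -> GP_adjP x1 x2 \/ GP_adjQ x1 x2.
Proof.
by case=> x12 x1_2 x2_2 [a|b|c]; [left; split=> //; left | left; split=> //; right | right].
Qed.

Lemma GP_adjP_sym x y : GP_adjP x y -> GP_adjP y x.
Proof.
case=> xy x2 y2 [[vs [es [pc es6 yC]]]|[vs [es [i [j [pc es8 /andP [ilt jlt] [i_x j_y] ij]]]]]].
- split; rewrite 1?eq_sym //; left; exists vs, es.
  by rewrite (comp_eq yC); split=> //; apply: mem_comp.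
- have yC : inl y \in comp P (inl x) by rewrite (path_comp_vertices pc) inE -j_y mem_nth.
  split; rewrite 1?eq_sym //; right; exists vs, es, j, i; rewrite (comp_eq yC).
  split=> //; first by rewrite jlt ilt.
    by rewrite !(set_nth_default (inl x)).
  by case: ij; [right | left].
Qed.

Lemma GP_adjQ_sym x y : GP_adjQ x y -> GP_adjQ y x.
Proof. by case=> xy [yC x1 y1]; split; rewrite 1?eq_sym //; split=> //; apply: comp_sym. Qed.

Lemma GP_adjQ_fun x y z : GP_adjQ x y -> GP_adjQ x z -> y = z.
Proof.
case=> xy [yC x1 y1] [xz [zC _ z1]].
have yx : (inl y : vtx) != inl x by rewrite inj_eq 1?eq_sym //; apply: inl_inj.
have zx : (inl z : vtx) != inl x by rewrite inj_eq 1?eq_sym //; apply: inl_inj.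
apply: inl_inj; apply: (degS1_comp_uniq degS_setC_le2 _ yC zC y1 z1 yx zx).
by rewrite x1.
Qed.

Lemma path_comp_size_eq C vs es vs' es' :
  is_path_comp P C vs es -> is_path_comp P C vs' es' -> size es = size es'.
Proof.
move=> pc pc'; apply: succn_inj.
by rewrite -(path_comp_size pc) -(path_comp_size pc') -(card_path_comp pc) (card_path_comp pc').
Qed.

Lemma P8_middle_far_from_ends C vs es d a b : is_path_comp P C vs es -> size es = 8 ->
  adjS P (nth d vs 4) a -> adjS P a b -> 1 < degS P b.
Proof.
move=> pc es8 mid_a ab; have szv := path_comp_size pc.
have [j1 j1lt [a_def j1_near]] := path_comp_adj_index (i := 4) pc (ltac:(lia)) mid_a.
rewrite a_def in ab; have [j2 j2lt [-> j2_near]] := path_comp_adj_index pc j1lt ab.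
by apply: (path_comp_degS_interior pc); rewrite es8; lia.
Qed.

Lemma P8_quarter_near_end C vs es d j : is_path_comp P C vs es -> size es = 8 ->
  j = 2 \/ j = 6 -> exists a b, [/\ adjS P (nth d vs j) a, adjS P a b & degS P b <= 1].
Proof.
move=> pc es8 [->|->].
- exists (nth d vs 1), (nth d vs 0).
  split; last by apply: (path_comp_degS_end pc).
    by rewrite adjS_sym (path_comp_adj pc) ?es8.
  by rewrite adjS_sym (path_comp_adj pc) ?es8.
- exists (nth d vs 7), (nth d vs 8).
  by rewrite !(path_comp_adj pc) ?(path_comp_degS_end pc) ?es8.
Qed.

Lemma dist4_P8_index C vs es i j (x y : X) : is_path_comp P C vs es -> size es = 8 ->
  i < size vs -> j < size vs -> nth (inl x) vs i = inl x -> nth (inl x) vs j = inl y ->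
  degS P (inl x) = 2 -> degS P (inl y) = 2 -> (i = j + 4 \/ j = i + 4) ->
  (i = 2 /\ j = 6) \/ (i = 6 /\ j = 2).
Proof.
move=> pc es8 ilt jlt i_x j_y x2 y2 ij.
have [iX jX] : isX (nth (inl x) vs i) /\ isX (nth (inl x) vs j) by rewrite i_x j_y.
have [i2 j2] : degS P (nth (inl x) vs i) = 2 /\ degS P (nth (inl x) vs j) = 2 by rewrite i_x j_y.
have := path_factor_deg2_index pc ilt iX i2; have := path_factor_deg2_index pc jlt jX j2.
by rewrite es8; lia.
Qed.

Lemma same_P6_fun x y z : x != y -> x != z ->
  degS P (inl x) = 2 -> degS P (inl y) = 2 -> degS P (inl z) = 2 ->
  same_P6 x y -> inl z \in comp P (inl x) -> y = z.
Proof.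
move=> xy xz x2 y2 z2 [vs [es [pc es6 yC]]] zC.
have [kx [_ kx_x kx_in kx_even]] := path_factor_deg2_mem x pc (mem_comp ex ey P (inl x)) x2.
have [ky [_ ky_y ky_in ky_even]] := path_factor_deg2_mem x pc yC y2.
have [kz [_ kz_z kz_in kz_even]] := path_factor_deg2_mem x pc zC z2.
rewrite es6 in kx_in ky_in kz_in.
have kxy : kx != ky by apply: contraNneq xy => kxy; apply/eqP/(@inl_inj X Y); rewrite kx_x ky_y kxy.
have kxz : kx != kz by apply: contraNneq xz => kxz; apply/eqP/(@inl_inj X Y); rewrite kx_x kz_z kxz.
by apply: (@inl_inj X Y); rewrite ky_y kz_z; congr nth; lia.
Qed.

(* [z] is at distance 4 from [x] on one listing of the path, so it sits at
   position 2 or 6 and is two steps away from an end; the middle vertex is not. *)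
Lemma dist4_P8_fun x y z : x != z ->
  degS P (inl x) = 2 -> degS P (inl y) = 2 -> degS P (inl z) = 2 ->
  dist4_P8 x y -> dist4_P8 x z -> y = z.
Proof.
move=> xz x2 y2 z2 [vs [es [i [j [pc es8 /andP [ilt jlt] [i_x j_y] ij]]]]].
case=> vs' [es' [i' [j' [pc' es'8 /andP [i'lt j'lt] [i'_x j'_z] i'j']]]].
have zC : inl z \in comp P (inl x) by rewrite (path_comp_vertices pc') inE -j'_z mem_nth.
have [k [klt k_z k_in k_even]] := path_factor_deg2_mem x pc zC z2.
have ij26 := dist4_P8_index pc es8 ilt jlt i_x j_y x2 y2 ij.
have ki : k != i by apply: contraNneq xz => ki; apply/eqP/(@inl_inj X Y); rewrite k_z ki.
have [kj|kj] := eqVneq k j; first by apply: (@inl_inj X Y); rewrite -j_y k_z kj.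
have k4 : k = 4 by rewrite es8 in k_in; lia.
have j'26 : j' = 2 \/ j' = 6.
  by case: (dist4_P8_index pc' es'8 i'lt j'lt i'_x j'_z x2 z2 i'j') => [[_ ->]|[_ ->]]; [right | left].
have [a [b [j'a ab b1]]] := P8_quarter_near_end (inl x) pc' es'8 j'26.
rewrite j'_z k_z k4 in j'a.
by have := P8_middle_far_from_ends pc es8 j'a ab; rewrite ltnNge b1.
Qed.

Lemma same_P6_dist4_P8 x y z : same_P6 x y -> ~ dist4_P8 x z.
Proof.
case=> [vs [es [pc es6 _]]] [vs' [es' [i [j [pc' es'8 _ _ _]]]]].
by have := path_comp_size_eq pc pc'; rewrite es6 es'8.
Qed.

Lemma GP_adjP_fun x y z : GP_adjP x y -> GP_adjP x z -> y = z.
Proof.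
case=> xy x2 y2 [xy6|xy8] [xz _ z2 [xz6|xz8]].
- by case: xz6 => [vs [es [_ _ zC]]]; apply: same_P6_fun xy6 zC.
- by case: (same_P6_dist4_P8 xy6 xz8).
- by case: (same_P6_dist4_P8 xz6 xy8).
- exact: dist4_P8_fun xz8.
Qed.
End PathFactor.

Theorem mainTheorem1 (X Y E : finType) (ex : E -> X) (ey : E -> Y) (P : {set E}) :
  biregular34 ex ey ->
  proper_path_factor ex ey P ->
  GP_bipartite ex ey P.
Proof.
move=> hb hp.
have matchP : partial_matching (GP_adjP ex ey P).
  by split; [apply: GP_adjP_sym | apply: GP_adjP_fun].
have matchQ : partial_matching (GP_adjQ ex ey P).
  by split; [apply: GP_adjQ_sym | apply: GP_adjQ_fun].
have [c cP] := partial_matchings_2coloring matchP matchQ.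
exists c => x1 x2 adj12; apply: cP (GP_adj_PQ adj12).
by case: adj12.
Qed.
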